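(* Consider problem (P) and suppose Assumptions A and B hold. Let $\{x^t\}$ be generated by SCP$_{ls}$ and let $\Omega_x$ be the set of accumulation points of $\{x^t\}$. Then (i) $\Omega_x\neq\emptyset$ and $F\equiv\bar F^*$ on $\Omega_x$; (ii) $\{F(x^t)\}$ is nonincreasing and converges to $\bar F^*$, where $\bar F^*:=\lim_{t\to\infty}\bar F(x^{t+1},x^t,L_g^t)$ (this limit exists and is finite).
   Context: Problem (P): $\min_{x\in\mathbb R^n}F(x):=f(x)+P_1(x)-P_2(x)+\delta_{\{g\le 0\}}(x)$, where $f:\mathbb R^n\to\mathbb R$ is continuously differentiable, $P_1,P_2:\mathbb R^n\to\mathbb R$ are convex and continuous, $g=(g_1,\dots,g_m):\mathbb R^n\to\mathbb R^m$ is continuous with $\{x:g(x)\le0\}\neq\emptyset$ (componentwise inequalities), $\delta_C$ the indicator function of $C$. Assumption A: (i) $\nabla f$ is Lipschitz with modulus $L_f$; (ii) each $g_i$ is differentiable with $\nabla g_i$ Lipschitz with modulus $L_{g_i}$; (iii) $F$ is level-bounded. Assumption B (MFCQ): each $g_i$ is continuously differentiable and for every $x$ with $g(x)\le0$ there is $d$ with $\langle\nabla g_i(x),d\rangle<0$ for all $i\in I(x):=\{j:g_j(x)=0\}$. $\bar G(x,y,w)\in\mathbb R^m$ has components $\bar G_i(x,y,w)=g_i(y)+\langle\nabla g_i(y),x-y\rangle+\frac{w_i}{2}\|x-y\|^2$, and $\bar F(x,y,w):=f(x)+P_1(x)-P_2(x)+\delta_{\{\bar G\le0\}}(x,y,w)$.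 Algorithm SCP$_{ls}$: fix $c>0$, $0<\underline L<\bar L$, $\tau>1$ and $x^0$ with $g(x^0)\le0$. For $t=0,1,2,\dots$: (1) pick any $\xi^t\in\partial P_2(x^t)$; (2) choose $L_f^{t,0}\in[\underline L,\bar L]$, $L_g^{t,0}\in[\underline L,\bar L]^m$ arbitrarily, set $\tilde L_f=L_f^{t,0}$, $\tilde L_g=L_g^{t,0}$; (3) compute $\tilde x$ solving: minimize $\langle\nabla f(x^t)-\xi^t,x-x^t\rangle+\frac{\tilde L_f}{2}\|x-x^t\|^2+P_1(x)$ subject to $\bar G(x,x^t,\tilde L_g)\le0$. If $g(\tilde x)\le0$ and $F(\tilde x)\le F(x^t)-\frac c2\|\tilde x-x^t\|^2$, set $x^{t+1}=\tilde x$, $L_f^t=\tilde L_f$, $L_g^t=\tilde L_g$ and go to iteration $t+1$; otherwise, if $g(\tilde x)\not\le0$ replace $\tilde L_g$ by $\tau\tilde L_g$, while if $g(\tilde x)\le0$ but the decrease inequality fails replace $\tilde L_f$ by $\tau\tilde L_f$, and repeat step (3). *)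

From mathcomp Require Import ssreflect ssrfun ssrbool eqtype ssrnat seq fintype bigop.
From Stdlib Require Import Reals.
Open Scope R_scope.

Definition vec (n : nat) := 'I_n -> R.

Definition vadd {n} (x y : vec n) : vec n := fun i => x i + y i.
Definition vsub {n} (x y : vec n) : vec n := fun i => x i - y i.

Definition inner {n} (x y : vec n) : R := \big[Rplus/0%R]_(i < n) (x i * y i).
Definition sqnorm {n} (x : vec n) : R := inner x x.
Definition norm {n} (x : vec n) : R := sqrt (sqnorm x).

(** Extended reals (only +oo is needed, for indicator functions). *)
Inductive ereal := Fin (r : R) | PInf.

Definition ele (a b : ereal) : Prop :=
  match a, b with
  | _, PInf => True
  | Fin x, Fin y => x <= y
  | PInf, Fin _ => False
  end.

Definition ecv (s : nat -> ereal) (l : R) : Prop :=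
  forall eps, 0 < eps -> exists N : nat, forall t : nat, le N t ->
    exists r, s t = Fin r /\ Rabs (r - l) < eps.

Definition has_gradient {n} (f : vec n -> R) (gf : vec n -> vec n) : Prop :=
  forall x eps, 0 < eps -> exists delta, 0 < delta /\
    forall h : vec n, norm h < delta ->
      Rabs (f (vadd x h) - f x - inner (gf x) h) <= eps * norm h.

Definition cont_vec {n} (G : vec n -> vec n) : Prop :=
  forall x eps, 0 < eps -> exists delta, 0 < delta /\
    forall y, norm (vsub y x) < delta -> norm (vsub (G y) (G x)) < eps.

Definition cont_real {n} (P : vec n -> R) : Prop :=
  forall x eps, 0 < eps -> exists delta, 0 < delta /\
    forall y, norm (vsub y x) < delta -> Rabs (P y - P x) < eps.

Definition lipschitz_vec {n} (G : vec n -> vec n) (L : R) : Prop :=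
  forall x y, norm (vsub (G x) (G y)) <= L * norm (vsub x y).

Definition convex_fun {n} (P : vec n -> R) : Prop :=
  forall (x y : vec n) (lam : R), 0 <= lam <= 1 ->
    P (fun i => lam * x i + (1 - lam) * y i) <= lam * P x + (1 - lam) * P y.

Definition subgrad {n} (P : vec n -> R) (x xi : vec n) : Prop :=
  forall y, P y >= P x + inner xi (vsub y x).

Definition feasible {n m} (g : 'I_m -> vec n -> R) (x : vec n) : Prop :=
  forall i, g i x <= 0.

Definition feasibleb {n m} (g : 'I_m -> vec n -> R) (x : vec n) : bool :=
  [forall i : 'I_m, if Rle_dec (g i x) 0 then true else false].

Definition Fval {n m} (f P1 P2 : vec n -> R) (g : 'I_m -> vec n -> R)
  (x : vec n) : ereal :=
  if feasibleb g x then Fin (f x + P1 x - P2 x) else PInf.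

Definition level_bounded {n m} (f P1 P2 : vec n -> R) (g : 'I_m -> vec n -> R) : Prop :=
  forall a : R, exists M : R, forall x,
    ele (Fval f P1 P2 g x) (Fin a) -> norm x <= M.

Definition MFCQ {n m} (g : 'I_m -> vec n -> R) (gg : 'I_m -> vec n -> vec n) : Prop :=
  forall x, feasible g x -> exists d : vec n,
    forall i, g i x = 0 -> inner (gg i x) d < 0.

Definition Gbar {n m} (g : 'I_m -> vec n -> R) (gg : 'I_m -> vec n -> vec n)
  (x y : vec n) (w : vec m) (i : 'I_m) : R :=
  g i y + inner (gg i y) (vsub x y) + w i / 2 * sqnorm (vsub x y).

Definition Fbar {n m} (f P1 P2 : vec n -> R) (g : 'I_m -> vec n -> R)
  (gg : 'I_m -> vec n -> vec n) (x y : vec n) (w : vec m) : ereal :=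
  if [forall i : 'I_m, if Rle_dec (Gbar g gg x y w i) 0 then true else false]
  then Fin (f x + P1 x - P2 x) else PInf.

Definition sub_obj {n} (gf : vec n -> vec n) (P1 : vec n -> R)
  (xt xi : vec n) (Lf : R) (x : vec n) : R :=
  inner (vsub (gf xt) xi) (vsub x xt) + Lf / 2 * sqnorm (vsub x xt) + P1 x.

Definition solves_sub {n m} (gf : vec n -> vec n) (P1 : vec n -> R)
  (g : 'I_m -> vec n -> R) (gg : 'I_m -> vec n -> vec n)
  (xt xi : vec n) (Lf : R) (Lg : vec m) (z : vec n) : Prop :=
  (forall i, Gbar g gg z xt Lg i <= 0) /\
  forall x, (forall i, Gbar g gg x xt Lg i <= 0) ->
    sub_obj gf P1 xt xi Lf z <= sub_obj gf P1 xt xi Lf x.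

(** One outer iteration of SCP_ls: from xt, the line search (inner loop with
    trial parameters Lfs k, Lgs k and trial points xs k, k = 0..K) terminates
    at k = K, producing x_{t+1} = xnext with accepted parameters LfA, LgA. *)
Definition scp_iter {n m} (f : vec n -> R) (gf : vec n -> vec n) (P1 P2 : vec n -> R)
  (g : 'I_m -> vec n -> R) (gg : 'I_m -> vec n -> vec n)
  (c Lmin Lmax tau : R) (xt xnext : vec n) (LfA : R) (LgA : vec m) : Prop :=
  let Fo := fun z => f z + P1 z - P2 z in
  let accept := fun z => feasible g z /\ Fo z <= Fo xt - c / 2 * sqnorm (vsub z xt) in
  exists (xi : vec n) (K : nat) (Lfs : nat -> R) (Lgs : nat -> vec m) (xs : nat -> vec n),
    subgrad P2 xt xi /\
    Lmin <= Lfs 0%nat <= Lmax /\ (forall i, Lmin <= Lgs 0%nat i <= Lmax) /\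
    (forall k : nat, le k K -> solves_sub gf P1 g gg xt xi (Lfs k) (Lgs k) (xs k)) /\
    (forall k : nat, lt k K ->
       ~ accept (xs k) /\
       (~ feasible g (xs k) ->
          Lgs (S k) = (fun i => tau * Lgs k i) /\ Lfs (S k) = Lfs k) /\
       (feasible g (xs k) ->
          Lfs (S k) = tau * Lfs k /\ Lgs (S k) = Lgs k)) /\
    accept (xs K) /\ xnext = xs K /\ LfA = Lfs K /\ LgA = Lgs K.

Definition accum_point {n} (x : nat -> vec n) (z : vec n) : Prop :=
  forall eps, 0 < eps -> forall N : nat, exists t : nat, le N t /\ norm (vsub (x t) z) < eps.

(** The iterates stay feasible and, by the sufficient-decrease test of the line
    search, F(x^t) is nonincreasing; since F is level-bounded they stay in a
    bounded set, so Bolzano-Weierstrass gives an accumulation point z.  As F is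
    continuous on the feasible set, a nonincreasing sequence of values with z
    as an accumulation point of the arguments converges to F(z), and every
    other accumulation point (feasible, the feasible set being closed) has the
    same value.  Finally x^{t+1} satisfies the linearized constraints, so
    Fbar(x^{t+1}, x^t, L_g^t) = F(x^{t+1}) has the same limit. *)

From HB Require Import structures.
From mathcomp Require Import ssreflect ssrfun ssrbool eqtype ssrnat seq fintype bigop.
From Stdlib Require Import Reals Rtopology Lra Lia FunctionalExtensionality.
From Stdlib Require Import IndefiniteDescription.
Open Scope R_scope.

Set Implicit Arguments.
Unset Strict Implicit.

HB.instance Definition _ :=
  Monoid.isComLaw.Build R 0 Rplus (fun a b c => esym (Rplus_assoc a b c)) Rplus_comm Rplus_0_l.

Lemma sum_ge0 n (F : 'I_n -> R) :
  (forall i, 0 <= F i) -> 0 <= \big[Rplus/0]_(i < n) F i.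
Proof. by move=> F_ge0; apply: (big_ind (fun s => 0 <= s)) => //; [lra | move=> a b; lra]. Qed.

Lemma sum_le_card_mul n (F : 'I_n -> R) b :
  (forall i, F i <= b) -> \big[Rplus/0]_(i < n) F i <= INR n * b.
Proof.
elim: n F => [|n IHn] F Fb; first by rewrite big_ord0 /=; lra.
rewrite S_INR big_ord_recr.
have := IHn (fun i => F (widen_ord (leqnSn n) i)) (fun i => Fb _).
have := Fb ord_max; rewrite /=; lra.
Qed.

Lemma sqnorm_ge0 n (v : vec n) : 0 <= sqnorm v.
Proof. by apply: sum_ge0 => i; nra. Qed.

Lemma Rabs_coord_le_norm n (v : vec n) i : Rabs (v i) <= norm v.
Proof.
rewrite /norm /sqnorm /inner (bigD1 i) //= -sqrt_Rsqr_abs.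
apply: sqrt_le_1_alt; rewrite /Rsqr -{1}(Rplus_0_r (v i * v i)).
apply: Rplus_le_compat_l.
by apply: (big_ind (fun s => 0 <= s)) => //; [lra | move=> a b; lra | move=> j _; nra].
Qed.

Lemma norm_lt_of_coord_lt n eps : 0 < eps -> exists e, 0 < e /\
  forall v : vec n, (forall i, Rabs (v i) < e) -> norm v < eps.
Proof.
move=> eps_gt0; have n_ge0 := pos_INR n.
set e := eps / (INR n + 1).
have e_gt0 : 0 < e by apply: Rdiv_lt_0_compat; lra.
have eps_eq : eps = e * (INR n + 1) by rewrite /e; field; lra.
exists e; split => // v v_small.
have sq_le : sqnorm v <= INR n * e ^ 2.
  apply: sum_le_card_mul => i.
  have := v_small i; have := Rabs_pos (v i); have := Rsqr_abs (v i).
  rewrite /Rsqr; nra.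
rewrite /norm -(sqrt_pow2 eps); last lra.
apply: sqrt_lt_1_alt; split; [exact: sqnorm_ge0 | rewrite eps_eq; nra].
Qed.

Lemma Rabs_inner_le n (a h : vec n) :
  Rabs (inner a h) <= (\big[Rplus/0]_(i < n) Rabs (a i)) * norm h.
Proof.
have -> : (\big[Rplus/0]_(i < n) Rabs (a i)) * norm h =
          \big[Rplus/0]_(i < n) (Rabs (a i) * norm h).
  by apply: (big_ind2 (fun s s' => s * norm h = s')) => //; [lra | move=> p q r s <- <-; lra].
apply: (big_ind2 (fun s s' => Rabs s <= s')).
- by rewrite Rabs_R0; lra.
- by move=> p q r s pq rs; apply: Rle_trans (Rabs_triang _ _) _; lra.
- move=> i _; rewrite Rabs_mult.
  exact: Rmult_le_compat_l _ _ _ (Rabs_pos _) (Rabs_coord_le_norm h i).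
Qed.

Lemma vadd_vsub n (y z : vec n) : vadd z (vsub y z) = y.
Proof. by apply: functional_extensionality => i; rewrite /vadd /vsub; lra. Qed.

Lemma cont_real_of_gradient n (f : vec n -> R) gf :
  has_gradient f gf -> cont_real f.
Proof.
move=> f_diff z eps eps_gt0.
set A := \big[Rplus/0]_(i < n) Rabs (gf z i).
have A_ge0 : 0 <= A by apply: sum_ge0 => i; apply: Rabs_pos.
have [d [d_gt0 f_taylor]] := f_diff z 1 Rlt_0_1.
exists (Rmin d (eps / (A + 2))); split.
  by apply: Rmin_pos => //; apply: Rdiv_lt_0_compat; lra.
move=> y y_near.
have y_d : norm (vsub y z) < d by apply: Rlt_le_trans y_near (Rmin_l _ _).
have y_eps : norm (vsub y z) < eps / (A + 2) by apply: Rlt_le_trans y_near (Rmin_r _ _).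
have := f_taylor _ y_d; rewrite vadd_vsub => rem_le.
have inner_le := Rabs_inner_le (gf z) (vsub y z); rewrite -/A in inner_le.
have norm_ge0 : 0 <= norm (vsub y z) by apply: sqrt_pos.
have lin_lt : (A + 2) * norm (vsub y z) < eps.
  rewrite [X in _ < X](_ : eps = (A + 2) * (eps / (A + 2))); last by field; lra.
  by apply: Rmult_lt_compat_l => //; lra.
set N := norm (vsub y z) in rem_le inner_le lin_lt norm_ge0.
set I := inner (gf z) (vsub y z) in rem_le inner_le.
have := Rabs_triang (f y - f z - I) I.
rewrite (_ : f y - f z - I + I = f y - f z); last by ring.
nra.
Qed.

Lemma cont_real_add n (P Q : vec n -> R) :
  cont_real P -> cont_real Q -> cont_real (fun z => P z + Q z).
Proof.
move=> P_cont Q_cont z eps eps_gt0.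
have [dP [dP_gt0 P_near]] := P_cont z (eps / 2) ltac:(lra).
have [dQ [dQ_gt0 Q_near]] := Q_cont z (eps / 2) ltac:(lra).
exists (Rmin dP dQ); split; first exact: Rmin_pos.
move=> y y_near.
have := P_near y (Rlt_le_trans _ _ _ y_near (Rmin_l _ _)).
have := Q_near y (Rlt_le_trans _ _ _ y_near (Rmin_r _ _)).
rewrite (_ : P y + Q y - (P z + Q z) = (P y - P z) + (Q y - Q z)); last by ring.
by move=> Q_lt P_lt; apply: Rle_lt_trans (Rabs_triang _ _) _; lra.
Qed.

Lemma cont_real_opp n (P : vec n -> R) : cont_real P -> cont_real (fun z => - P z).
Proof.
move=> P_cont z eps eps_gt0; have [d [d_gt0 P_near]] := P_cont z eps eps_gt0.
exists d; split => // y y_near.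
by rewrite (_ : - P y - - P z = - (P y - P z)); [rewrite Rabs_Ropp; exact: P_near | ring].
Qed.

Definition strict_incr (phi : nat -> nat) : Prop := forall k, (phi k < phi (S k))%coq_nat.

Lemma strict_incr_ge phi : strict_incr phi -> forall k, (k <= phi k)%coq_nat.
Proof. by move=> phi_incr; elim=> [|k IHk]; [lia | have := phi_incr k; lia]. Qed.

Lemma strict_incr_comp phi psi :
  strict_incr phi -> strict_incr psi -> strict_incr (fun k => phi (psi k)).
Proof.
move=> phi_incr psi_incr k.
have phi_lt : forall a b, (a < b)%coq_nat -> (phi a < phi b)%coq_nat.
  move=> a; elim=> [|b IHb] ab; first lia.
  have := phi_incr b; case: (Nat.eq_dec a b) => [-> | neq]; first lia.
  by have := IHb ltac:(lia); lia.
exact/phi_lt/psi_incr.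
Qed.

Lemma ValAdh_subseq_cv (v : nat -> R) l :
  ValAdh v l -> exists psi, strict_incr psi /\ Un_cv (fun k => v (psi k)) l.
Proof.
move=> v_adh.
have pick : forall N k : nat,
    {p | (N <= p)%coq_nat /\ Rabs (v p - l) < / (INR k + 1)}.
  move=> N k; apply: constructive_indefinite_description.
  have r_gt0 : 0 < / (INR k + 1) by apply: Rinv_0_lt_compat; have := pos_INR k; lra.
  have [p [Np vp]] := v_adh (disc l (mkposreal _ r_gt0)) N
    ltac:(by exists (mkposreal _ r_gt0)).
  by exists p.
pose psi := fix psi k := match k with
  | O => proj1_sig (pick O O)
  | S k' => proj1_sig (pick (S (psi k')) k) end.
have psi_close : forall k, Rabs (v (psi k) - l) < / (INR k + 1).
  by case=> [|k] /=; case: (pick _ _) => p [].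
exists psi; split; first by move=> k /=; case: (pick _ _) => p [] /=; lia.
move=> eps eps_gt0; have [N [Neps N_gt0]] := archimed_cor1 eps eps_gt0.
exists N => k Nk; apply: Rlt_trans (psi_close k) _; apply: Rle_lt_trans Neps.
apply: Rinv_le_contravar; first exact: lt_0_INR.
by have := le_INR _ _ Nk; lra.
Qed.

Lemma bounded_seq_subseq_cv_prefix n (x : nat -> vec n) M :
  (forall t i, Rabs (x t i) <= M) ->
  forall k, (k <= n)%coq_nat -> exists phi (z : vec n), strict_incr phi /\
    forall eps, 0 < eps -> exists K, forall t, (K <= t)%coq_nat ->
      forall i : 'I_n, (i < k)%coq_nat -> Rabs (x (phi t) i - z i) < eps.
Proof.
move=> x_bnd; elim=> [|k IHk] kn.
  exists (fun t : nat => t), (fun=> 0); split; first by move=> k /=; lia.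
  by move=> eps _; exists O => t _ i; lia.
have [phi [z [phi_incr z_lim]]] := IHk ltac:(lia).
have kn' : (k < n)%nat by apply/ltP; lia.
pose ik := Ordinal kn'.
have x_in : forall t, - M <= x (phi t) ik <= M.
  move=> t; have := x_bnd (phi t) ik.
  have := Rle_abs (- x (phi t) ik); rewrite Rabs_Ropp.
  by have := Rle_abs (x (phi t) ik); lra.
have [l l_adh] := Bolzano_Weierstrass _ _ (compact_P3 (- M) M) x_in.
have [psi [psi_incr l_lim]] := ValAdh_subseq_cv l_adh.
exists (fun t => phi (psi t)), (fun j => if j == ik then l else z j); split.
  exact: strict_incr_comp.
move=> eps eps_gt0.
have [K1 HK1] := l_lim eps eps_gt0.
have [K2 HK2] := z_lim eps eps_gt0.
exists (Nat.max K1 K2) => t Kt i ik1.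
case: (eqVneq i ik) => [-> | neq]; first by apply: HK1; lia.
apply: HK2.
  by have := strict_incr_ge psi_incr t; lia.
have : nat_of_ord i <> k by move=> E; move/eqP: neq; apply; apply: ord_inj.
lia.
Qed.

Lemma bounded_seq_accum_point n (x : nat -> vec n) M :
  (forall t i, Rabs (x t i) <= M) -> exists z, accum_point x z.
Proof.
move=> x_bnd.
have [phi [z [phi_incr z_lim]]] := bounded_seq_subseq_cv_prefix x_bnd (le_n n).
exists z => eps eps_gt0 N.
have [e [e_gt0 norm_lt]] := norm_lt_of_coord_lt n eps_gt0.
have [K HK] := z_lim e e_gt0.
exists (phi (Nat.max K N)); split; first by have := strict_incr_ge phi_incr (Nat.max K N); lia.
apply: norm_lt => i; apply: HK; first lia.
by apply/ltP; exact: ltn_ord.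
Qed.

Section AccumulationPoints.

Variables (n : nat) (h : vec n -> R) (x : nat -> vec n).
Hypothesis h_cont : cont_real h.

Lemma accum_point_nonpos w :
  (forall t, h (x t) <= 0) -> accum_point x w -> h w <= 0.
Proof.
move=> hx_le0 w_acc; apply: Rnot_lt_le => hw_gt0.
have [d [d_gt0 h_near]] := h_cont w hw_gt0.
have [t [_ xt_near]] := w_acc d d_gt0 O.
have := Rabs_def2 _ _ (h_near _ xt_near); have := hx_le0 t; lra.
Qed.

Lemma decreasing_accum_point_cv z :
  Un_decreasing (fun t => h (x t)) -> accum_point x z -> Un_cv (fun t => h (x t)) (h z).
Proof.
move=> hx_decr z_acc.
have hz_le : forall t, h z <= h (x t).
  move=> t; apply: Rnot_lt_le => hxt_lt.
  have gap_gt0 : 0 < h z - h (x t) by lra.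
  have [d [d_gt0 h_near]] := h_cont z gap_gt0.
  have [s [ts xs_near]] := z_acc d d_gt0 t.
  have := Rabs_def2 _ _ (h_near _ xs_near).
  have := decreasing_prop _ _ _ hx_decr ts; lra.
move=> eps eps_gt0.
have [d [d_gt0 h_near]] := h_cont z eps_gt0.
have [s [_ xs_near]] := z_acc d d_gt0 O.
exists s => t st; rewrite /Rdist Rabs_right; last by have := hz_le t; lra.
have := Rabs_def2 _ _ (h_near _ xs_near).
have := decreasing_prop _ _ _ hx_decr st; lra.
Qed.

Lemma accum_point_cv_value l w :
  Un_cv (fun t => h (x t)) l -> accum_point x w -> h w = l.
Proof.
move=> hx_cv w_acc; apply: cond_eq => eps eps_gt0.
have eps2_gt0 : 0 < eps / 2 by lra.
have [d [d_gt0 h_near]] := h_cont w eps2_gt0.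
have [N hx_near] := hx_cv (eps / 2) eps2_gt0.
have [t [Nt xt_near]] := w_acc d d_gt0 N.
have := hx_near t Nt; have := h_near _ xt_near; rewrite /Rdist => h1 h2.
rewrite (_ : h w - l = - (h (x t) - h w) + (h (x t) - l)); last by ring.
by apply: Rle_lt_trans (Rabs_triang _ _) _; rewrite Rabs_Ropp; lra.
Qed.

End AccumulationPoints.

Lemma ecv_Fin (s : nat -> ereal) (u : nat -> R) l :
  (forall t, s t = Fin (u t)) -> Un_cv u l -> ecv s l.
Proof.
move=> s_fin u_cv eps eps_gt0; have [N Nu] := u_cv eps eps_gt0.
by exists N => t Nt; exists (u t); split; [exact: s_fin | exact: Nu].
Qed.

Definition Fobj n (f P1 P2 : vec n -> R) (z : vec n) : R := f z + P1 z - P2 z.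

Section SCPls.

Variables (n m : nat) (f : vec n -> R) (gf : vec n -> vec n) (P1 P2 : vec n -> R).
Variables (g : 'I_m -> vec n -> R) (gg : 'I_m -> vec n -> vec n).

Lemma cont_Fobj : has_gradient f gf -> cont_real P1 -> cont_real P2 -> cont_real (Fobj f P1 P2).
Proof.
move=> f_diff P1_cont P2_cont.
exact: cont_real_add (cont_real_add (cont_real_of_gradient f_diff) P1_cont) (cont_real_opp P2_cont).
Qed.

Lemma Fval_feasible y : feasible g y -> Fval f P1 P2 g y = Fin (Fobj f P1 P2 y).
Proof.
move=> y_feas; rewrite /Fval (_ : feasibleb g y = true) //.
by apply/forallP => i; case: Rle_dec => // ?; have := y_feas i; lra.
Qed.

Lemma Fbar_linearized_feasible y xt w :
  (forall i, Gbar g gg y xt w i <= 0) -> Fbar f P1 P2 g gg y xt w = Fin (Fobj f P1 P2 y).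
Proof.
move=> y_lin; rewrite /Fbar (_ : [forall i, _] = true) //.
by apply/forallP => i; case: Rle_dec => // ?; have := y_lin i; lra.
Qed.

Lemma scp_iter_descent c Lmin Lmax tau xt xn LfA LgA :
  scp_iter f gf P1 P2 g gg c Lmin Lmax tau xt xn LfA LgA ->
  [/\ feasible g xn,
      Fobj f P1 P2 xn <= Fobj f P1 P2 xt - c / 2 * sqnorm (vsub xn xt)
    & forall i, Gbar g gg xn xt LgA i <= 0].
Proof.
case=> xi [K [Lfs [Lgs [xs [_ [_ [_ [xs_sol [_ [[xK_feas xK_dec] [-> [_ ->]]]]]]]]]]]].
by split => //; exact: (xs_sol K (le_n K)).1.
Qed.

End SCPls.

Theorem mainTheorem8 (n m : nat)
  (f : vec n -> R) (gf : vec n -> vec n) (P1 P2 : vec n -> R)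
  (g : 'I_m -> vec n -> R) (gg : 'I_m -> vec n -> vec n)
  (Lf : R) (Lgi : 'I_m -> R)
  (c Lmin Lmax tau : R)
  (x : nat -> vec n) (LfS : nat -> R) (LgS : nat -> vec m)
  (* problem data *)
  (Hf : has_gradient f gf) (Hgfc : cont_vec gf)
  (HP1 : convex_fun P1) (HP1c : cont_real P1)
  (HP2 : convex_fun P2) (HP2c : cont_real P2)
  (Hgc : forall i, cont_real (g i))
  (Hne : exists x0, feasible g x0)
  (* Assumption A *)
  (HA1 : lipschitz_vec gf Lf)
  (HA2 : forall i, has_gradient (g i) (gg i) /\ lipschitz_vec (gg i) (Lgi i))
  (HA3 : level_bounded f P1 P2 g)
  (* Assumption B *)
  (HB1 : forall i, cont_vec (gg i))
  (HB2 : MFCQ g gg)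
  (* algorithm parameters *)
  (Hc : 0 < c) (HL : 0 < Lmin < Lmax) (Htau : 1 < tau)
  (* the sequence generated by SCP_ls *)
  (Hx0 : feasible g (x 0%nat))
  (Hiter : forall t : nat,
     scp_iter f gf P1 P2 g gg c Lmin Lmax tau (x t) (x (S t)) (LfS t) (LgS t)) :
  exists Fstar : R,
    ecv (fun t => Fbar f P1 P2 g gg (x (S t)) (x t) (LgS t)) Fstar /\
    (* (i) *)
    (exists z, accum_point x z) /\
    (forall z, accum_point x z -> Fval f P1 P2 g z = Fin Fstar) /\
    (* (ii) *)
    (forall t : nat, ele (Fval f P1 P2 g (x (S t))) (Fval f P1 P2 g (x t))) /\
    ecv (fun t => Fval f P1 P2 g (x t)) Fstar.
Proof.
have descent t := scp_iter_descent (Hiter t).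
have feas : forall t, feasible g (x t) by elim=> [|t _] //; case: (descent t).
have Fobj_decr : Un_decreasing (fun t => Fobj f P1 P2 (x t)).
  move=> t; case: (descent t) => _ dec _.
  by have := sqnorm_ge0 (vsub (x t.+1) (x t)); nra.
have [M sublevel_bnd] := HA3 (Fobj f P1 P2 (x 0%nat)).
have [z z_acc] : exists z, accum_point x z.
  apply: (@bounded_seq_accum_point _ _ M) => t i.
  apply: Rle_trans (Rabs_coord_le_norm _ i) (sublevel_bnd _ _).
  by rewrite Fval_feasible //=; apply: decreasing_prop Fobj_decr _; lia.
have Fobj_cont := cont_Fobj Hf HP1c HP2c.
have Fobj_cv := decreasing_accum_point_cv Fobj_cont Fobj_decr z_acc.
exists (Fobj f P1 P2 z); split; [|split; [by exists z | split; [|split]]].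
- apply: (@ecv_Fin _ (fun t => Fobj f P1 P2 (x t.+1))).
    by move=> t; case: (descent t) => _ _ lin; exact: Fbar_linearized_feasible.
  by apply: (Un_cv_ext _ _ _ _ (CV_shift' _ 1 _ Fobj_cv)) => t; rewrite Nat.add_1_r.
- move=> w w_acc.
  have w_feas : feasible g w.
    by move=> i; exact: (accum_point_nonpos (x := x) (Hgc i) (fun t => feas t i) w_acc).
  by rewrite Fval_feasible // (accum_point_cv_value Fobj_cont Fobj_cv w_acc).
- by move=> t; rewrite !Fval_feasible //=; exact: Fobj_decr.
- by apply: ecv_Fin Fobj_cv => t; exact: Fval_feasible.
Qed.
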